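(* Let $S(t,p,q)=\sum_{\pi}t^{|\pi|}p^{\mathrm{asc}(\pi)}q^{\mathrm{des}(\pi)}$, summed over all separable permutations $\pi$, and let $I(t,p,q)$ be the same sum restricted to irreducible separable permutations. Then $$pq\,S(t,p,q)^3+pq\,t\,S(t,p,q)^2+S(t,p,q)\bigl((p+q)t-1\bigr)+t=0$$ and $$I(t,p,q)=\frac{t+q\,(t+S(t,p,q))\,S(t,p,q)}{1+q\,S(t,p,q)}.$$
   Context: A permutation of length $n$ is a word $\pi=\pi_1\cdots\pi_n$ containing each element of $[n]$ exactly once; $|\pi|=n$. For $\pi$ of length $m$ and $\sigma$ of length $n$, $\pi\oplus\sigma=\pi_1\cdots\pi_m(\sigma_1+m)\cdots(\sigma_n+m)$ and $\pi\ominus\sigma=(\pi_1+n)\cdots(\pi_m+n)\sigma_1\cdots\sigma_n$. Separable permutations are the permutations of length $\ge1$ obtained from the permutation $1$ by repeatedly applying $\oplus$ and $\ominus$ (equivalently, those avoiding $2413$ and $3142$). The permutation $1$ is irreducible; a permutation of length $n\ge2$ is irreducible if there is no $i$ with $2\le i\le n$ such that every element of $\pi_1\cdots\pi_{i-1}$ is less than every element of $\pi_i\cdots\pi_n$. $\mathrm{asc}(\pi)=\#\{i<n:\pi_i<\pi_{i+1}\}$, $\mathrm{des}(\pi)=\#\{i<n:\pi_i>\pi_{i+1}\}$. *)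

From HB Require Import structures.
From mathcomp Require Import all_boot all_order all_algebra.
From Stdlib Require Import ClassicalEpsilon.
Set Implicit Arguments. Unset Strict Implicit. Unset Printing Implicit Defensive.
Import Order.TTheory GRing.Theory Num.Theory.

Definition is_perm (s : seq nat) : bool := perm_eq s (iota 1 (size s)).

Definition oplus (a b : seq nat) : seq nat := a ++ map (addn (size a)) b.
Definition ominus (a b : seq nat) : seq nat := map (addn (size b)) a ++ b.

Inductive separable : seq nat -> Prop :=
| sep_one : separable [:: 1]
| sep_plus a b : separable a -> separable b -> separable (oplus a b)
| sep_minus a b : separable a -> separable b -> separable (ominus a b).

Definition separableb (s : seq nat) : bool :=
  if excluded_middle_informative (separable s) then true else false.

(* Irreducible: pi = 1, or length >= 2 and no i in [2,n] with every element of
   pi_1..pi_{i-1} less than every element of pi_i..pi_n (here j = i-1). *)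
Definition irreducible (s : seq nat) : bool :=
  (size s == 1) ||
  ((2 <= size s) &&
   ~~ has (fun j => allrel (fun x y => x < y) (take j s) (drop j s))
          (iota 1 (size s).-1)).

Definition asc (s : seq nat) : nat :=
  count (fun i => nth 0 s i < nth 0 s i.+1) (iota 0 (size s).-1).
Definition des (s : seq nat) : nat :=
  count (fun i => nth 0 s i > nth 0 s i.+1) (iota 0 (size s).-1).

Local Open Scope ring_scope.

Definition Scoef (R : comNzRingType) (p q : R) (n : nat) : R :=
  \sum_(s <- permutations (iota 1 n) | separableb s) p ^+ asc s * q ^+ des s.
Definition Icoef (R : comNzRingType) (p q : R) (n : nat) : R :=
  \sum_(s <- permutations (iota 1 n) | separableb s && irreducible s)
     p ^+ asc s * q ^+ des s.

(* truncations mod t^N, as polynomials in t *)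
Definition Strunc (R : comNzRingType) (p q : R) (N : nat) : {poly R} :=
  \poly_(n < N) Scoef p q n.
Definition Itrunc (R : comNzRingType) (p q : R) (N : nat) : {poly R} :=
  \poly_(n < N) Icoef p q n.

(* A separable permutation of length at least 2 is a direct sum or
   a skew sum, never both: in a direct sum its first entry lies below its last
   one, in a skew sum above.  A sum-decomposable one factors uniquely as
   a (+) b with a sum-irreducible, and (+) creates exactly one ascent at the
   junction, (-) exactly one descent.  With J the series of skew-irreducible
   separable permutations this gives S = I (1 + p S), S = J (1 + q S) and
   I = t + q J S.  The last two give I (1 + q S) = t (1 + q S) + q S^2, and
   multiplying by 1 + p S and using the first one gives the cubic.  All
   identities are proved coefficientwise below t^N. *)

From HB Require Import structures.
From mathcomp Require Import all_boot all_order all_algebra.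
From mathcomp Require Import zify ring.
From Stdlib Require Import ClassicalEpsilon.
Import GRing.Theory.
Set Implicit Arguments. Unset Strict Implicit. Unset Printing Implicit Defensive.

Lemma separableP s : reflect (separable s) (separableb s).
Proof. by rewrite /separableb; case: excluded_middle_informative => h; constructor. Qed.

Definition dsum (d : bool) a b := if d then oplus a b else ominus a b.

Lemma separable_dsum d a b : separable a -> separable b -> separable (dsum d a b).
Proof. by case: d; constructor. Qed.

Lemma separable_dsum_ind (P : seq nat -> Prop) :
  P [:: 1] ->
  (forall d a b, separable a -> P a -> separable b -> P b -> P (dsum d a b)) ->
  forall s, separable s -> P s.
Proof. by move=> P1 Pd s; elim=> // a b *; [apply: (Pd true) | apply: (Pd false)]. Qed.

Definition dsum_l d (a b : seq nat) := map (addn (if d then 0 else size b)) a.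
Definition dsum_r d (a b : seq nat) := map (addn (if d then size a else 0)) b.

Lemma dsumE d a b : dsum d a b = dsum_l d a b ++ dsum_r d a b.
Proof. by case: d; rewrite /dsum_l /dsum_r //= (@eq_map _ _ (addn 0) id add0n) map_id. Qed.

Lemma size_dsum d a b : size (dsum d a b) = size a + size b.
Proof. by rewrite dsumE size_cat !size_map. Qed.

Lemma dsumA d a1 a2 b : dsum d (dsum d a1 a2) b = dsum d a1 (dsum d a2 b).
Proof.
case: d; rewrite /= /oplus /ominus ?size_cat ?size_map map_cat -map_comp -catA.
- by congr (_ ++ (_ ++ _)); apply: eq_map => x /=; rewrite addnA.
- by congr (_ ++ _); apply: eq_map => x /=; rewrite addnA [size a2 + _]addnC.
Qed.

Lemma separable_size_gt0 s : separable s -> 0 < size s.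
Proof.
by move: s; apply: separable_dsum_ind => // d a b _ ha _ hb; rewrite size_dsum ltn_addr.
Qed.

Lemma separable_is_perm s : separable s -> is_perm s.
Proof.
move: s; apply: separable_dsum_ind => // d a b _ pa _ pb.
rewrite /is_perm size_dsum; case: d => /=; rewrite /oplus /ominus.
- by rewrite iotaD perm_cat // addnC iotaDl perm_map.
- by rewrite addnC iotaD perm_catC perm_cat // addnC iotaDl perm_map.
Qed.

Lemma separable_mem s x : separable s -> x \in s -> 0 < x <= size s.
Proof. by move=> /separable_is_perm ps; rewrite (perm_mem ps) mem_iota; lia. Qed.

Definition dlt (d : bool) (x y : nat) := if d then x < y else y < x.
Definition dsplit d (s : seq nat) j := allrel (dlt d) (take j s) (drop j s).
Definition dirreducible d (s : seq nat) :=
  (size s == 1) || ((2 <= size s) && ~~ has (dsplit d s) (iota 1 (size s).-1)).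

Lemma dirreducibleP d s : 2 <= size s ->
  reflect (forall j, 0 < j < size s -> ~~ dsplit d s j) (dirreducible d s).
Proof.
move=> s2; have s1 : (size s == 1) = false by apply/eqP => s1; rewrite s1 in s2.
rewrite /dirreducible s1 s2 /=.
apply: (iffP hasPn) => h j hj; apply: h; move: hj; rewrite mem_iota; lia.
Qed.

Lemma dsplit_reducible d s j : 0 < j < size s -> dsplit d s j -> ~~ dirreducible d s.
Proof.
move=> hj split_j; have s2 : 2 <= size s by lia.
by apply/negP => /(dirreducibleP _ s2)/(_ j hj); rewrite split_j.
Qed.

Lemma dlt_shift d k x y : dlt d (k + x) (k + y) = dlt d x y.
Proof. by case: d; rewrite /= ltn_add2l. Qed.

Lemma dlt_asym d x y : dlt d x y -> ~~ dlt (~~ d) x y.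
Proof. by case: d => /=; lia. Qed.

Lemma dsplit_shift d k s j : dsplit d (map (addn k) s) j = dsplit d s j.
Proof.
rewrite /dsplit -map_take -map_drop allrel_mapl allrel_mapr.
by apply: eq_allrel => x y; rewrite dlt_shift.
Qed.

Lemma dlt_dsum d a b : separable a -> separable b ->
  allrel (dlt d) (dsum_l d a b) (dsum_r d a b).
Proof.
move=> sa sb; apply/allrelP => _ _ /mapP [x xa ->] /mapP [y yb ->].
by have := separable_mem sa xa; have := separable_mem sb yb; case: d => /=; lia.
Qed.

Lemma dsplit_dsum d a b : separable a -> separable b -> dsplit d (dsum d a b) (size a).
Proof.
by move=> sa sb; rewrite /dsplit dsumE take_size_cat ?drop_size_cat ?size_map ?dlt_dsum.
Qed.

Lemma dsum_reducible d a b : separable a -> separable b -> ~~ dirreducible d (dsum d a b).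
Proof.
move=> sa sb; apply: (dsplit_reducible (j := size a)); last exact: dsplit_dsum.
by have := separable_size_gt0 sa; have := separable_size_gt0 sb; rewrite size_dsum; lia.
Qed.

Lemma mem_head_cat (s1 s2 : seq nat) : 0 < size s1 -> head 0 (s1 ++ s2) \in s1.
Proof. by case: s1 => // x s1 _; apply: mem_head. Qed.

Lemma mem_last_cat (s1 s2 : seq nat) : 0 < size s2 -> last 0 (s1 ++ s2) \in s2.
Proof. by case: s2 => // y s2 _; rewrite last_cat /= mem_last. Qed.

Lemma mem_head_take (s : seq nat) j : 0 < j -> 0 < size s -> head 0 s \in take j s.
Proof. by case: s => // x s; case: j => // j _ _; apply: mem_head. Qed.

Lemma mem_last_drop (s : seq nat) j : j < size s -> last 0 s \in drop j s.
Proof. by move=> js; rewrite -{1}(cat_take_drop j s) mem_last_cat // size_drop subn_gt0. Qed.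

Lemma dsum_dual_irreducible d a b : separable a -> separable b ->
  dirreducible (~~ d) (dsum d a b).
Proof.
move=> sa sb; set s := dsum d a b.
have [ha hb] := (separable_size_gt0 sa, separable_size_gt0 sb).
have ends : dlt d (head 0 s) (last 0 s).
  rewrite /s dsumE; apply: (allrelP (dlt_dsum d sa sb)).
  - by apply: mem_head_cat; rewrite size_map.
  - by apply: mem_last_cat; rewrite size_map.
have s2 : 2 <= size s by rewrite size_dsum; lia.
apply/(dirreducibleP _ s2) => j /andP [j_gt0 j_lt]; apply/negP => /allrelP split_j.
have := split_j _ _ (mem_head_take j_gt0 (ltnW s2)) (mem_last_drop j_lt).
exact/negP/dlt_asym.
Qed.

Lemma dsum_factor d s : separable s -> ~~ dirreducible d s ->
  exists a b, [/\ separable a, dirreducible d a, separable b & s = dsum d a b].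
Proof.
move: s; apply: separable_dsum_ind => // d' a b sa IHa sb _ red.
case: (eqVneq d' d) => [eq_d | neq_d].
- rewrite -eq_d in IHa red *; case irr_a: (dirreducible d' a); first by exists a, b.
  have [a1 [a2 [sa1 irr_a1 sa2 ->]]] := IHa (negbT irr_a).
  by exists a1, (dsum d' a2 b); rewrite dsumA; split=> //; apply: separable_dsum.
- have dual : ~~ d' = d by move: neq_d {IHa red}; case: d; case: d'.
  by move: red; rewrite -dual dsum_dual_irreducible.
Qed.

(* The split of [dsum d a1 b1] after [a1] would split [a2] after [size a1]. *)
Lemma dsum_irreducible_prefix d a1 b1 a2 b2 : separable a1 -> separable b1 ->
  dirreducible d a2 -> size a1 < size a2 -> dsum d a1 b1 <> dsum d a2 b2.
Proof.
move=> sa1 sb1 irr_a2 lt_a12 eq_s.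
have hj : 0 < size a1 < size a2 by have := separable_size_gt0 sa1; lia.
have : dsplit d (dsum_l d a2 b2) (size a1).
  move: (dsplit_dsum d sa1 sb1); rewrite eq_s /dsplit dsumE.
  by rewrite take_cat drop_cat size_map lt_a12 allrel_catr => /andP [].
by rewrite /dsum_l dsplit_shift => /(dsplit_reducible hj); rewrite irr_a2.
Qed.

Lemma dsum_factor_uniq d a1 b1 a2 b2 :
    separable a1 -> separable b1 -> dirreducible d a1 ->
    separable a2 -> separable b2 -> dirreducible d a2 ->
  dsum d a1 b1 = dsum d a2 b2 -> a1 = a2 /\ b1 = b2.
Proof.
move=> sa1 sb1 irr1 sa2 sb2 irr2 eq_s.
have sa : size a1 = size a2.
  case: (ltngtP (size a1) (size a2)) => [lt_a|lt_a|//].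
  - by case: (dsum_irreducible_prefix sa1 sb1 irr2 lt_a eq_s).
  - by case: (dsum_irreducible_prefix sa2 sb2 irr1 lt_a (esym eq_s)).
have sb : size b1 = size b2 by move/(congr1 size): eq_s; rewrite !size_dsum sa => /addnI.
move/eqP: eq_s; rewrite !dsumE eqseq_cat ?size_map // /dsum_l /dsum_r sa sb.
by case/andP => /eqP /(inj_map (@addnI _)) -> /eqP /(inj_map (@addnI _)) ->.
Qed.

Lemma dirreducible_dual d s : separable s -> size s != 1 ->
  dirreducible (~~ d) s = ~~ dirreducible d s.
Proof.
move: s; apply: separable_dsum_ind => // d' a b sa _ sb _ _.
have := dsum_reducible d' sa sb; have := dsum_dual_irreducible d' sa sb.
by case: d; case: d' => /= -> /negPf ->.
Qed.

Definition adj_count (r : rel nat) (s : seq nat) :=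
  if s is x :: t then count id (pairmap r x t) else 0.

Lemma adj_countE r s :
  count (fun i => r (nth 0 s i) (nth 0 s i.+1)) (iota 0 (size s).-1) = adj_count r s.
Proof.
case: s => [|x t] //=.
have -> : pairmap r x t = [seq r (nth 0 (x :: t) i) (nth 0 t i) | i <- iota 0 (size t)].
  apply: (@eq_from_nth _ false); rewrite size_pairmap ?size_map ?size_iota // => i lt_it.
  by rewrite (nth_pairmap 0) // (nth_map 0) ?size_iota // nth_iota.
by rewrite count_map.
Qed.

Lemma adj_count_cat r s1 s2 : 0 < size s1 -> 0 < size s2 ->
  adj_count r (s1 ++ s2) = adj_count r s1 + r (last 0 s1) (head 0 s2) + adj_count r s2.
Proof.
by case: s1 => // x s1; case: s2 => // y s2 _ _ /=; rewrite pairmap_cat count_cat /= addnA.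
Qed.

Lemma adj_count_shift r k s : (forall x y, r (k + x) (k + y) = r x y) ->
  adj_count r (map (addn k) s) = adj_count r s.
Proof. by move=> rk; case: s => //= x s; elim: s x => //= y s IH x; rewrite rk IH. Qed.

Lemma adj_count_dsum r d a b : separable a -> separable b ->
    (forall k x y, r (k + x) (k + y) = r x y) ->
  adj_count r (dsum d a b) =
  adj_count r a + r (last 0 (dsum_l d a b)) (head 0 (dsum_r d a b)) + adj_count r b.
Proof.
move=> sa sb rk; rewrite dsumE adj_count_cat ?size_map ?separable_size_gt0 //.
by rewrite !adj_count_shift.
Qed.

Lemma dsum_junction d a b : separable a -> separable b ->
  dlt d (last 0 (dsum_l d a b)) (head 0 (dsum_r d a b)).
Proof.
move=> sa sb; apply: (allrelP (dlt_dsum d sa sb)).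
- by apply: (mem_last_cat [::]); rewrite size_map separable_size_gt0.
- rewrite -{1}[dsum_r d a b]cats0 mem_head_cat //.
  by rewrite size_map separable_size_gt0.
Qed.

Lemma asc_dsum d a b : separable a -> separable b -> asc (dsum d a b) = asc a + d + asc b.
Proof.
move=> sa sb; rewrite /asc !(adj_countE ltn) adj_count_dsum //.
  by case: d (dsum_junction d sa sb) => /= h; rewrite ?h // ltnNge (ltnW h).
by move=> k x y; rewrite /= ltn_add2l.
Qed.

Lemma des_dsum d a b : separable a -> separable b -> des (dsum d a b) = des a + ~~ d + des b.
Proof.
move=> sa sb; rewrite /des !(adj_countE (fun x y => y < x)) adj_count_dsum //.
  by case: d (dsum_junction d sa sb) => /= h; rewrite ?h // ltnNge (ltnW h).
by move=> k x y; rewrite /= ltn_add2l.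
Qed.

Definition sep_perms n := [seq s <- permutations (iota 1 n) | separableb s].
Definition irr_perms d n := [seq a <- sep_perms n | dirreducible d a].
Definition dsums d i m := [seq dsum d a b | a <- irr_perms d i, b <- sep_perms m].
Definition reducible_perms d n := [seq s | i <- index_iota 0 n.+1, s <- dsums d i (n - i)].

Lemma uniq_sep_perms n : uniq (sep_perms n).
Proof. exact/filter_uniq/permutations_uniq. Qed.

Lemma sep_permsP n s : reflect (separable s /\ size s = n) (s \in sep_perms n).
Proof.
rewrite /sep_perms mem_filter mem_permutations.
apply: (iffP andP) => [[/separableP ss /perm_size sz] | [ss <-]].
  by rewrite size_iota in sz.
by split; [apply/separableP | apply: separable_is_perm].
Qed.

Lemma irr_permsP d n a :
  reflect [/\ separable a, dirreducible d a & size a = n] (a \in irr_perms d n).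
Proof.
rewrite /irr_perms mem_filter.
apply: (iffP andP) => [[irr_a /sep_permsP [sa <-]] | [sa irr_a <-]] //.
by split=> //; apply/sep_permsP.
Qed.

Lemma sep_perms0 : sep_perms 0 = [::].
Proof. by rewrite /sep_perms /=; case: separableP => // /separable_size_gt0. Qed.

Lemma sep_perms1 : sep_perms 1 = [:: [:: 1]].
Proof. by rewrite /sep_perms /=; case: separableP => // /(_ sep_one). Qed.

Lemma uniq_dsums d i m : uniq (dsums d i m).
Proof.
apply: allpairs_uniq; [exact: filter_uniq (uniq_sep_perms i) | exact: uniq_sep_perms |].
move=> ? ? /allpairsP [[a1 b1] /= [/irr_permsP [sa1 irr1 _] /sep_permsP [sb1 _] ->]].
move=> /allpairsP [[a2 b2] /= [/irr_permsP [sa2 irr2 _] /sep_permsP [sb2 _] ->]] /= eq_s.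
by have [-> ->] := dsum_factor_uniq sa1 sb1 irr1 sa2 sb2 irr2 eq_s.
Qed.

Lemma dsums_index d i j m m' s : s \in dsums d i m -> s \in dsums d j m' -> i = j.
Proof.
move=> /allpairsP [[a1 b1] /= [/irr_permsP [sa1 irr1 <-] /sep_permsP [sb1 _] ->]].
move=> /allpairsP [[a2 b2] /= [/irr_permsP [sa2 irr2 <-] /sep_permsP [sb2 _] eq_s]].
by have [-> _] := dsum_factor_uniq sa1 sb1 irr1 sa2 sb2 irr2 eq_s.
Qed.

Lemma uniq_reducible_perms d n : uniq (reducible_perms d n).
Proof.
apply: allpairs_uniq_dep => [|i _|]; [exact: iota_uniq | exact: uniq_dsums |].
move=> ? ? /allpairsPdep [i [s [_ hs ->]]] /allpairsPdep [j [s' [_ hs' ->]]] /= eq_s.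
by move: hs'; rewrite -eq_s => /(dsums_index hs) ->.
Qed.

Lemma mem_reducible_perms d n s :
  (s \in reducible_perms d n) = (s \in sep_perms n) && ~~ dirreducible d s.
Proof.
apply/allpairsPdep/andP => [[i [_ [hi /allpairsP [[a b] /= [ha hb ->]] ->]]] | [hs red]].
- move: ha hb hi => /irr_permsP [sa _ <-] /sep_permsP [sb szb] hi.
  split; last exact: dsum_reducible.
  apply/sep_permsP; split; first exact: separable_dsum.
  by move: hi; rewrite size_dsum szb mem_index_iota; lia.
- move: hs => /sep_permsP [ss sz].
  have [a [b [sa irr_a sb eq_s]]] := dsum_factor ss red.
  have sz_ab : size a + size b = n by rewrite -sz eq_s size_dsum.
  exists (size a), s; split=> //; first by rewrite mem_index_iota; lia.
  by rewrite eq_s; apply: allpairs_f; [apply/irr_permsP | apply/sep_permsP; split=> //; lia].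
Qed.

Section Weights.
Local Open Scope ring_scope.
Variables (R : comNzRingType) (p q : R).

Definition weight s : R := p ^+ asc s * q ^+ des s.
Definition irr_coef d n := \sum_(s <- sep_perms n | dirreducible d s) weight s.

Lemma ScoefE n : Scoef p q n = \sum_(s <- sep_perms n) weight s.
Proof. by rewrite big_filter. Qed.

Lemma irr_coefE d n : irr_coef d n = \sum_(a <- irr_perms d n) weight a.
Proof. by rewrite big_filter. Qed.

Lemma IcoefE n : Icoef p q n = irr_coef true n.
Proof. by rewrite /irr_coef big_filter_cond. Qed.

Lemma Scoef0 : Scoef p q 0 = 0.
Proof. by rewrite ScoefE sep_perms0 big_nil. Qed.

Lemma irr_coef0 d : irr_coef d 0 = 0.
Proof. by rewrite /irr_coef sep_perms0 big_nil. Qed.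

Lemma weight_dsum d a b : separable a -> separable b ->
  weight (dsum d a b) = (if d then p else q) * (weight a * weight b).
Proof.
move=> sa sb; rewrite /weight asc_dsum // des_dsum // !exprD.
by case: d; rewrite /= expr1 expr0; ring.
Qed.

Lemma sum_reducible d n :
  \sum_(s <- sep_perms n | ~~ dirreducible d s) weight s =
  (if d then p else q) * \sum_(i < n.+1) irr_coef d i * Scoef p q (n - i).
Proof.
have perm_red : perm_eq (reducible_perms d n) [seq s <- sep_perms n | ~~ dirreducible d s].
  apply: uniq_perm; [exact: uniq_reducible_perms | exact: filter_uniq (uniq_sep_perms n) |].
  by move=> s; rewrite mem_filter mem_reducible_perms andbC.
rewrite -big_filter -(perm_big _ perm_red) big_allpairs_dep big_mkord big_distrr.
apply: eq_bigr => i _; rewrite irr_coefE ScoefE big_distrlr big_distrr.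
rewrite /dsums big_allpairs_dep; apply: eq_big_seq => a /irr_permsP [sa _ _].
rewrite big_distrr; apply: eq_big_seq => b /sep_permsP [sb _].
exact: weight_dsum.
Qed.

Lemma Scoef_rec d n : Scoef p q n =
  irr_coef d n + (if d then p else q) * \sum_(i < n.+1) irr_coef d i * Scoef p q (n - i).
Proof. by rewrite {1}ScoefE (bigID (dirreducible d)) sum_reducible. Qed.

Lemma Icoef_rec n : Icoef p q n =
  (n == 1)%:R + q * \sum_(i < n.+1) irr_coef false i * Scoef p q (n - i).
Proof.
rewrite IcoefE; have [-> | n_ne1] := eqVneq n 1.
  rewrite !big_ord_recr big_ord0 /= irr_coef0 Scoef0 mul0r mulr0 !add0r mulr0 addr0.
  by rewrite irr_coefE /irr_perms sep_perms1 /= big_cons big_nil /weight /= mulr1 addr0.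
rewrite mulr0n add0r -[RHS](sum_reducible false n) /irr_coef.
rewrite big_seq_cond [RHS]big_seq_cond; apply: eq_bigl => s.
apply: andb_id2l => /sep_permsP [ss sz].
by rewrite -(dirreducible_dual false ss) // sz.
Qed.

End Weights.

Section Truncation.
Local Open Scope ring_scope.
Variables (R : nzRingType) (N : nat).

Definition vanishes_below (P : {poly R}) := forall k, (k < N)%N -> P`_k = 0.

Lemma vanishes_belowN P : vanishes_below P -> vanishes_below (- P).
Proof. by move=> P0 k kN; rewrite coefN P0 ?oppr0. Qed.

Lemma vanishes_belowB P Q :
  vanishes_below P -> vanishes_below Q -> vanishes_below (P - Q).
Proof. by move=> P0 Q0 k kN; rewrite coefB P0 ?Q0 ?subr0. Qed.

Lemma vanishes_belowMl P Q : vanishes_below Q -> vanishes_below (P * Q).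
Proof.
move=> Q0 k kN; rewrite coefM big1 // => i _.
by rewrite Q0 ?mulr0 // (leq_ltn_trans (leq_subr i k) kN).
Qed.

Lemma vanishes_belowMr P Q : vanishes_below P -> vanishes_below (P * Q).
Proof.
move=> P0 k kN; rewrite coefM big1 // => i _.
by rewrite P0 ?mul0r // (leq_ltn_trans _ kN) // -ltnS.
Qed.

Lemma coef_poly_mul (a b : nat -> R) k : (k < N)%N ->
  ((\poly_(i < N) a i) * (\poly_(i < N) b i))`_k = \sum_(i < k.+1) a i * b (k - i)%N.
Proof.
move=> kN; rewrite coefM; apply: eq_bigr => i _.
by rewrite !coef_poly (leq_ltn_trans (leq_subr i k) kN) (leq_ltn_trans _ kN) // -ltnS.
Qed.

End Truncation.

Section Series.
Local Open Scope ring_scope.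
Variables (R : comNzRingType) (p q : R) (N : nat).

Local Notation St := (Strunc p q N).
Local Notation It := (Itrunc p q N).
Definition irr_trunc d := \poly_(n < N) irr_coef p q d n.
Local Notation Jt := (irr_trunc false).

Lemma Itrunc_irr : It = irr_trunc true.
Proof. by apply: eq_poly => n _; rewrite IcoefE. Qed.

Lemma Strunc_rec d : vanishes_below N (St - irr_trunc d * (1 + (if d then p else q) *: St)).
Proof.
move=> k kN; rewrite mulrDr mulr1 -scalerAr coefB coefD coefZ coef_poly_mul //.
by rewrite !coef_poly kN -(Scoef_rec p q d) subrr.
Qed.

Lemma Itrunc_rec : vanishes_below N (It - ('X + q *: (Jt * St))).
Proof.
move=> k kN; rewrite coefB coefD coefZ coef_poly_mul // coefX coef_poly kN.
by rewrite Icoef_rec subrr.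
Qed.

Lemma Itrunc_equation :
  vanishes_below N (It * (1 + q *: St) - ('X + q *: (('X + St) * St))).
Proof.
have -> : It * (1 + q *: St) - ('X + q *: (('X + St) * St)) =
    (It - ('X + q *: (Jt * St))) * (1 + q *: St) - (q *: St) * (St - Jt * (1 + q *: St)).
  by rewrite -!mul_polyC; ring.
apply: vanishes_belowB; first exact/vanishes_belowMr/Itrunc_rec.
exact/vanishes_belowMl/(Strunc_rec false).
Qed.

Lemma Strunc_equation : vanishes_below N
  ((p * q) *: St ^+ 3 + (p * q) *: ('X * St ^+ 2) + St * ((p + q) *: 'X - 1) + 'X).
Proof.
have -> : (p * q) *: St ^+ 3 + (p * q) *: ('X * St ^+ 2) + St * ((p + q) *: 'X - 1) + 'X =
    - ((St - It * (1 + p *: St)) * (1 + q *: St))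
    - (1 + p *: St) * (It * (1 + q *: St) - ('X + q *: (('X + St) * St))).
  by rewrite -!mul_polyC polyCM polyCD; ring.
apply: vanishes_belowB; last exact/vanishes_belowMl/Itrunc_equation.
by apply/vanishes_belowN/vanishes_belowMr; rewrite Itrunc_irr; apply: (Strunc_rec true).
Qed.

End Series.

Unset Implicit Arguments.
Set Strict Implicit.
Local Open Scope ring_scope.

Theorem theorem4 (R : comNzRingType) (p q : R) :
  (forall N k : nat, (k < N)%N ->
     let S := Strunc p q N in
     ((p * q) *: S ^+ 3 + (p * q) *: ('X * S ^+ 2)
      + S * ((p + q) *: 'X - 1) + 'X)`_k = 0)
  /\
  (forall N k : nat, (k < N)%N ->
     let S := Strunc p q N in
     let I := Itrunc p q N in
     (I * (1 + q *: S))`_k = ('X + q *: (('X + S) * S))`_k).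
Proof.
split=> N k ltkN.
- exact: Strunc_equation.
- by apply/subr0_eq; rewrite -coefB; apply: Itrunc_equation.
Qed.
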